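(* For every set of formulas $\Gamma$ and formula $\varphi$: (1) $\Gamma\vdash_{\mathsf{NeL}+\{\mathrm{(DI)}^s\}}\varphi$ iff $\Gamma\models_{\mathfrak{N}_w^{d}}\varphi$; (2) $\Gamma\vdash_{\mathsf{NeL}^{\mathrm{as}}+\{\mathrm{(DI)}^s\}}\varphi$ iff $\Gamma\models_{\mathfrak{N}^{d}}\varphi$; (3) $\varphi$ is a theorem of $\mathsf{NL}+\{\mathrm{(DI)}\}$ iff $\models_{\mathfrak{N}_w^{d}}\varphi$; (4) $\varphi$ is a theorem of $\mathsf{NL}^{\mathrm{as}}+\{\mathrm{(DI)}\}$ iff $\models_{\mathfrak{N}^{d}}\varphi$.
   Context: Formulas are built from a countably infinite set of variables using binary $\otimes,\circ$ and unary ${}^{*}$; $\mathbf{Fm}$ is the formula algebra. Abbreviations (also term operations): $\varphi\Rightarrow\psi:=(\varphi\circ\psi^{*})^{*}$; $\varphi\Leftrightarrow\psi:=(\varphi\Rightarrow\psi)\otimes(\psi\Rightarrow\varphi)$; $\varphi\not\Leftrightarrow\psi:=(\varphi\Leftrightarrow\psi)^{*}$; $\varphi\not\Leftrightarrow\psi\not\Leftrightarrow\chi:=((\varphi\not\Leftrightarrow\psi)\otimes(\varphi\not\Leftrightarrow\chi))\otimes(\psi\not\Leftrightarrow\chi)$; $\varphi\oplus\psi:=(\varphi^{*}\otimes\psi^{*})^{*}$. Axiom schemes: (A1) $\varphi\Rightarrow\varphi$; (A2) $(\varphi\circ\psi)\Rightarrow(\psi\circ\varphi)$; (A3) $\varphi\Rightarrow\varphi^{**}$;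 (A4) $(\varphi\Rightarrow\psi)\Rightarrow(\varphi\circ\psi)$; (A5) $(\varphi\otimes\psi)\Leftrightarrow(\psi\otimes\varphi)$; (A6) $((\varphi\otimes\psi)\Rightarrow\chi)\Rightarrow((\varphi\otimes\chi^{*})\Rightarrow\psi^{*})$; (A7) $(\varphi\not\Leftrightarrow\psi\not\Leftrightarrow\chi)\Rightarrow((\varphi\Rightarrow\psi)\Rightarrow((\psi\Rightarrow\chi)\Rightarrow(\varphi\Rightarrow\chi)))$. $\mathsf{NL}$ has these axioms and rules applicable only to theorems: from theorems $\varphi\Rightarrow\psi$, $\varphi$ infer $\psi$; from theorems $\varphi,\psi$ infer $\varphi\otimes\psi$; from theorems $\varphi\Leftrightarrow\psi$ and $\chi$ infer $\chi'$ ($\chi'$ from $\chi$ replacing one or more occurrences of $\varphi$ by $\psi$); from a theorem $\varphi\otimes\psi$ infer $\varphi$. $\mathsf{NeL}$ has the same axioms and the same rules applicable to arbitrary formulas, with $\Gamma\vdash_{\mathsf{NeL}}\varphi$ meaning derivability from $\Gamma$. The superscript ''as'' means adding axiom schemes $(\varphi\otimes\psi)\otimes\chi\Rightarrow\varphi\otimes(\psi\otimes\chi)$ and $\varphi\otimes(\psi\otimes\chi)\Rightarrow(\varphi\otimes\psi)\otimes\chi$. (DI): from a theorem $\varphi$ infer $\varphi\oplus\psi$; $\mathrm{(DI)}^s$: the rule $\varphi/\varphi\oplus\psi$ for arbitrary formulas. A weak $\mathcal{N}$-algebra is an algebra $(A,\otimes,\circ,{}^{*})$ of type $(2,2,1)$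 with $\otimes,\circ$ commutative, $x^{**}=x$, $(x\otimes y)\circ z=(x\otimes z)\circ y$; an $\mathcal{N}$-algebra has in addition $\otimes$ associative. With $\mathsf{t}\ne\mathsf{f}$ symbols not in $A$, $\overline A=A\cup\{\mathsf{t},\mathsf{f}\}$, an $\mathfrak{N}_w$-model is $(\mathbf A,\perp,\{\mathsf{t},\mathsf{f}\})$, $\mathbf A$ a weak $\mathcal{N}$-algebra, $\perp\subseteq\overline A\times\overline A$, such that for all $x,y,z\in A$: (a) $x\perp x^{*}$; (b) $x\perp y^{*}$ and $y\perp x^{*}$ imply $x=y$; (c) $x\perp y$ iff $x\circ y\perp\mathsf{t}$; (d) $x\perp\mathsf{t}$ iff $x^{*}\perp\mathsf{f}$; (e) $x\perp\mathsf{f}$ and $y\perp\mathsf{f}$ iff $x\otimes y\perp\mathsf{f}$; (f) $(x\circ y^{*})^{*}\perp(x\circ y)^{*}$; (g) $x\perp y$ and $x\perp\mathsf{f}$ imply $y\perp\mathsf{t}$; (h) $(x\not\Leftrightarrow y\not\Leftrightarrow z)\perp((x\Rightarrow y)\Rightarrow((y\Rightarrow z)\Rightarrow(x\Rightarrow z)))^{*}$. $\mathfrak{N}_w^{d}$ ($\mathfrak{N}^{d}$) is the class of $\mathfrak{N}_w$-models (with $\mathbf A$ an $\mathcal{N}$-algebra) satisfying: for all $x,y\in A$, $x\perp\mathsf{f}$ implies $x\oplus y\perp\mathsf{f}$. $F_\perp=\{a\in A:a\perp\mathsf{f}\}$. For a class $K$: $\Gamma\models_K\varphi$ iff there is a finite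 $\Gamma'\subseteq\Gamma$ such that for all models in $K$ and homomorphisms $h:\mathbf{Fm}\to\mathbf A$, $h(\Gamma')\subseteq F_\perp$ implies $h(\varphi)\in F_\perp$; $\models_K\varphi$ iff $h(\varphi)\perp\mathsf{f}$ for all models in $K$ and all $h$. *)

From Stdlib Require Import List.
Import ListNotations.
Set Implicit Arguments.

Inductive form : Type :=
| Var : nat -> form
| Ot : form -> form -> form      (* ⊗ *)
| Ci : form -> form -> form      (* ∘ *)
| St : form -> form.             (* ^* *)

Definition fImp (p q : form) : form := St (Ci p (St q)).
Definition fIff (p q : form) : form := Ot (fImp p q) (fImp q p).
Definition fNIff (p q : form) : form := St (fIff p q).
Definition fNIff3 (p q r : form) : form :=
  Ot (Ot (fNIff p q) (fNIff p r)) (fNIff q r).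
Definition fOplus (p q : form) : form := St (Ot (St p) (St q)).

(** [repl0 p q c c']: c' is obtained from c by replacing zero or more
    occurrences of p by q;  [repl1]: one or more occurrences. *)
Inductive repl0 (p q : form) : form -> form -> Prop :=
| r0_refl c : repl0 p q c c
| r0_here : repl0 p q p q
| r0_ot a a' b b' : repl0 p q a a' -> repl0 p q b b' -> repl0 p q (Ot a b) (Ot a' b')
| r0_ci a a' b b' : repl0 p q a a' -> repl0 p q b b' -> repl0 p q (Ci a b) (Ci a' b')
| r0_st a a' : repl0 p q a a' -> repl0 p q (St a) (St a').

Inductive repl1 (p q : form) : form -> form -> Prop :=
| r1_here : repl1 p q p q
| r1_otl a a' b b' : repl1 p q a a' -> repl0 p q b b' -> repl1 p q (Ot a b) (Ot a' b')
| r1_otr a a' b b' : repl0 p q a a' -> repl1 p q b b' -> repl1 p q (Ot a b) (Ot a' b')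
| r1_cil a a' b b' : repl1 p q a a' -> repl0 p q b b' -> repl1 p q (Ci a b) (Ci a' b')
| r1_cir a a' b b' : repl0 p q a a' -> repl1 p q b b' -> repl1 p q (Ci a b) (Ci a' b')
| r1_st a a' : repl1 p q a a' -> repl1 p q (St a) (St a').

Inductive axiom (as_ : bool) : form -> Prop :=
| A1 p : axiom as_ (fImp p p)
| A2 p q : axiom as_ (fImp (Ci p q) (Ci q p))
| A3 p : axiom as_ (fImp p (St (St p)))
| A4 p q : axiom as_ (fImp (fImp p q) (Ci p q))
| A5 p q : axiom as_ (fIff (Ot p q) (Ot q p))
| A6 p q r : axiom as_ (fImp (fImp (Ot p q) r) (fImp (Ot p (St r)) (St q)))
| A7 p q r : axiom as_ (fImp (fNIff3 p q r)
                         (fImp (fImp p q) (fImp (fImp q r) (fImp p r))))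
| Aas1 p q r : as_ = true -> axiom as_ (fImp (Ot (Ot p q) r) (Ot p (Ot q r)))
| Aas2 p q r : as_ = true -> axiom as_ (fImp (Ot p (Ot q r)) (Ot (Ot p q) r)).

(** [NeL_DIs as_ G p]: G |- p in NeL + (DI)^s (as_ = false) or
    NeL^as + (DI)^s (as_ = true); rules apply to arbitrary formulas. *)
Inductive NeL_DIs (as_ : bool) (G : form -> Prop) : form -> Prop :=
| e_hyp p : G p -> NeL_DIs as_ G p
| e_ax p : axiom as_ p -> NeL_DIs as_ G p
| e_mp p q : NeL_DIs as_ G (fImp p q) -> NeL_DIs as_ G p -> NeL_DIs as_ G q
| e_adj p q : NeL_DIs as_ G p -> NeL_DIs as_ G q -> NeL_DIs as_ G (Ot p q)
| e_repl p q c c' : NeL_DIs as_ G (fIff p q) -> NeL_DIs as_ G c ->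
    repl1 p q c c' -> NeL_DIs as_ G c'
| e_ote p q : NeL_DIs as_ G (Ot p q) -> NeL_DIs as_ G p
| e_di p q : NeL_DIs as_ G p -> NeL_DIs as_ G (fOplus p q).

(** [NL_DI as_ p]: p is a theorem of NL + (DI) (resp. NL^as + (DI));
    rules apply only to theorems. *)
Inductive NL_DI (as_ : bool) : form -> Prop :=
| t_ax p : axiom as_ p -> NL_DI as_ p
| t_mp p q : NL_DI as_ (fImp p q) -> NL_DI as_ p -> NL_DI as_ q
| t_adj p q : NL_DI as_ p -> NL_DI as_ q -> NL_DI as_ (Ot p q)
| t_repl p q c c' : NL_DI as_ (fIff p q) -> NL_DI as_ c ->
    repl1 p q c c' -> NL_DI as_ c'
| t_ote p q : NL_DI as_ (Ot p q) -> NL_DI as_ p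
| t_di p q : NL_DI as_ p -> NL_DI as_ (fOplus p q).

Record wNalg := {
  car :> Type;
  aot : car -> car -> car;
  aci : car -> car -> car;
  ast : car -> car;
  aot_comm : forall x y, aot x y = aot y x;
  aci_comm : forall x y, aci x y = aci y x;
  ast_inv : forall x, ast (ast x) = x;
  amix : forall x y z, aci (aot x y) z = aci (aot x z) y
}.

Arguments aot {w} _ _.
Arguments aci {w} _ _.
Arguments ast {w} _.

Section TermOps.
Variable A : wNalg.
Definition aImp (x y : A) : A := ast (aci x (ast y)).
Definition aIff (x y : A) : A := aot (aImp x y) (aImp y x).
Definition aNIff (x y : A) : A := ast (aIff x y).
Definition aNIff3 (x y z : A) : A := aot (aot (aNIff x y) (aNIff x z)) (aNIff y z).
Definition aOplus (x y : A) : A := ast (aot (ast x) (ast y)).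
End TermOps.
Arguments aOplus {A} _ _.
Arguments aImp {A} _ _.
Arguments aNIff3 {A} _ _ _.


(** \overline A = A ∪ {t, f} *)
Inductive ext (A : Type) : Type :=
| inA : A -> ext A
| tt_ : ext A
| ff_ : ext A.
Arguments tt_ {A}.
Arguments ff_ {A}.

Record Nwmodel := {
  alg : wNalg;
  perp : ext alg -> ext alg -> Prop;
  m_a : forall x : alg, perp (inA x) (inA (ast x));
  m_b : forall x y : alg, perp (inA x) (inA (ast y)) -> perp (inA y) (inA (ast x)) -> x = y;
  m_c : forall x y : alg, perp (inA x) (inA y) <-> perp (inA (aci x y)) tt_;
  m_d : forall x : alg, perp (inA x) tt_ <-> perp (inA (ast x)) ff_;
  m_e : forall x y : alg, (perp (inA x) ff_ /\ perp (inA y) ff_) <-> perp (inA (aot x y)) ff_;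
  m_f : forall x y : alg, perp (inA (ast (aci x (ast y)))) (inA (ast (aci x y)));
  m_g : forall x y : alg, perp (inA x) (inA y) -> perp (inA x) ff_ -> perp (inA y) tt_;
  m_h : forall x y z : alg,
      perp (inA (aNIff3 x y z))
           (inA (ast (aImp (aImp x y) (aImp (aImp y z) (aImp x z)))))
}.

Definition Fperp (M : Nwmodel) (a : alg M) : Prop := perp M (inA a) ff_.

Definition in_Nwd (M : Nwmodel) : Prop :=
  forall x y : alg M, perp M (inA x) ff_ -> perp M (inA (aOplus x y)) ff_.

Definition in_Nd (M : Nwmodel) : Prop :=
  (forall x y z : alg M, aot x (aot y z) = aot (aot x y) z) /\ in_Nwd M.

Definition is_hom (A : wNalg) (h : form -> A) : Prop :=
  (forall p q, h (Ot p q) = aot (h p) (h q)) /\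
  (forall p q, h (Ci p q) = aci (h p) (h q)) /\
  (forall p, h (St p) = ast (h p)).

Arguments is_hom {A} _.

Definition conseq (K : Nwmodel -> Prop) (G : form -> Prop) (p : form) : Prop :=
  exists G' : list form, (forall g, In g G' -> G g) /\
    forall M : Nwmodel, K M -> forall h : form -> alg M, is_hom h ->
      (forall g, In g G' -> Fperp M (h g)) -> Fperp M (h p).

Definition valid (K : Nwmodel -> Prop) (p : form) : Prop :=
  forall M : Nwmodel, K M -> forall h : form -> alg M, is_hom h -> Fperp M (h p).

(* Soundness: every axiom is orthogonal to f in every model, and each rule preserves
   orthogonality to f; (DI)^s is exactly the defining condition of the class N_w^d.
   Completeness: formulas modulo Γ-provable equivalence [Γ ⊢ a ⇔ b] form a weak
   N-algebra (an N-algebra when the associativity axioms are present), and setting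
   [a ⊥ f] iff [Γ ⊢ a], [a ⊥ t] iff [Γ ⊢ a^*], [a ⊥ b] iff [Γ ⊢ a ⇒ b^*] makes it a
   model of N_w^d whose F_⊥ consists of the classes of Γ-derivable formulas, so the
   quotient map refutes every non-derivable formula.  Theorems of NL are the
   consequences of the empty set in NeL, which gives (3) and (4). *)

From Stdlib Require Import List ClassicalEpsilon FunctionalExtensionality PropExtensionality ProofIrrelevance.
Import ListNotations.
Set Implicit Arguments.

Lemma repl1_repl0 p q c c' : repl1 p q c c' -> repl0 p q c c'.
Proof. induction 1; eauto using repl0. Qed.

Lemma repl0_eq_or_repl1 p q c c' : repl0 p q c c' -> c = c' \/ repl1 p q c c'.
Proof.
  induction 1 as [| |a a' b b' _ [<-|Ra] _ [<-|Rb]|a a' b b' _ [<-|Ra] _ [<-|Rb]|a a' _ [<-|Ra]];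
    eauto 6 using repl1, repl0, repl1_repl0.
Qed.

Section ProvableEquivalence.
Variables (as_ : bool) (G : form -> Prop).
Local Notation derivable := (NeL_DIs as_ G).

Definition peq (a b : form) : Prop := derivable (fIff a b).

Lemma peq_refl p : peq p p.
Proof. apply e_adj; apply e_ax, A1. Qed.

Lemma peq_derivable p q : peq p q -> derivable p -> derivable q.
Proof. intros Hpq Hp. exact (e_repl Hpq Hp (r1_here p q)). Qed.

Lemma peq_sym p q : peq p q -> peq q p.
Proof.
  intro Hpq. eapply e_mp; [| exact Hpq].
  eapply e_ote, e_ax, (A5 as_ (fImp p q) (fImp q p)).
Qed.

Lemma peq_derivable_iff p q : peq p q -> (derivable p <-> derivable q).
Proof. split; apply peq_derivable; auto using peq_sym. Qed.

Lemma peq_trans p q r : peq p q -> peq q r -> peq p r.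
Proof.
  intros Hpq Hqr. apply peq_sym in Hpq.
  eapply e_repl; [exact Hpq | exact Hqr |].
  apply r1_otl; [apply r1_st, r1_cil; constructor|].
  apply r0_st, r0_ci; [apply r0_refl | apply r0_st, r0_here].
Qed.

Lemma peq_repl0 p q c c' : peq p q -> repl0 p q c c' -> peq c c'.
Proof.
  intros Hpq R. destruct (repl0_eq_or_repl1 R) as [<-|R1]; [apply peq_refl|].
  eapply e_repl; [exact Hpq | apply (peq_refl c) |].
  apply r1_otl.
  - apply r1_st, r1_cir; [apply r0_refl | apply r1_st, R1].
  - apply r0_st, r0_ci; [apply repl1_repl0, R1 | apply r0_refl].
Qed.

Lemma peq_Ot a a' b b' : peq a a' -> peq b b' -> peq (Ot a b) (Ot a' b').
Proof.
  intros Ha Hb. eapply peq_trans.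
  - apply (peq_repl0 Ha). apply r0_ot; [apply r0_here | apply r0_refl].
  - apply (peq_repl0 Hb). apply r0_ot; [apply r0_refl | apply r0_here].
Qed.

Lemma peq_Ci a a' b b' : peq a a' -> peq b b' -> peq (Ci a b) (Ci a' b').
Proof.
  intros Ha Hb. eapply peq_trans.
  - apply (peq_repl0 Ha). apply r0_ci; [apply r0_here | apply r0_refl].
  - apply (peq_repl0 Hb). apply r0_ci; [apply r0_refl | apply r0_here].
Qed.

Lemma peq_St a a' : peq a a' -> peq (St a) (St a').
Proof. intro Ha. apply (peq_repl0 Ha), r0_st, r0_here. Qed.

Lemma peq_imp a a' b b' : peq a a' -> peq b b' -> peq (fImp a b) (fImp a' b').
Proof. intros. unfold fImp. auto using peq_St, peq_Ci. Qed.

Lemma peq_Ot_comm a b : peq (Ot a b) (Ot b a).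
Proof. apply e_ax, A5. Qed.

Lemma peq_Ci_comm a b : peq (Ci a b) (Ci b a).
Proof. apply e_adj; apply e_ax, A2. Qed.

Lemma peq_St_St p : peq (St (St p)) p.
Proof.
  apply peq_sym, e_adj; [apply e_ax, A3|].
  eapply peq_derivable; [| apply e_ax, (A1 as_ (St p))].
  apply peq_St, peq_Ci_comm.
Qed.

Lemma peq_mix x y z : peq (Ci (Ot x y) z) (Ci (Ot x z) y).
Proof.
  (* (A6) with [r := z^*], read up to double negation *)
  assert (Hswap : forall y z, derivable (fImp (St (Ci (Ot x y) z)) (St (Ci (Ot x z) y)))).
  { intros y' z'. eapply peq_derivable; [| apply e_ax, (A6 as_ x y' (St z'))].
    apply peq_imp; apply peq_St, peq_Ci; auto using peq_refl, peq_St_St, peq_Ot. }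
  assert (HSt : peq (St (Ci (Ot x y) z)) (St (Ci (Ot x z) y))) by (apply e_adj; apply Hswap).
  apply peq_St in HSt.
  eapply peq_trans; [apply peq_sym, peq_St_St|].
  eapply peq_trans; [exact HSt | apply peq_St_St].
Qed.

End ProvableEquivalence.

Section ModelFacts.
Variable M : Nwmodel.
Implicit Types x y : alg M.

Lemma perp_ast_l x : perp M (inA (ast x)) (inA x).
Proof. pose proof (m_a M (ast x)) as H. rewrite ast_inv in H. exact H. Qed.

Lemma Fperp_imp x y : Fperp M (aImp x y) <-> perp M (inA x) (inA (ast y)).
Proof. unfold Fperp, aImp. rewrite <- m_d, <- m_c. tauto. Qed.

Lemma Fperp_Ot x y : Fperp M (aot x y) <-> Fperp M x /\ Fperp M y.
Proof. symmetry. apply m_e. Qed.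

Lemma Fperp_mp x y : Fperp M (aImp x y) -> Fperp M x -> Fperp M y.
Proof.
  rewrite Fperp_imp. intros Hxy Hx.
  pose proof (proj1 (m_d M _) (m_g M _ _ Hxy Hx)) as Hy.
  rewrite ast_inv in Hy. exact Hy.
Qed.

Lemma Fperp_iff_eq x y : Fperp M (aIff _ x y) -> x = y.
Proof.
  unfold aIff. rewrite Fperp_Ot, !Fperp_imp. intros [Hxy Hyx]. now apply m_b.
Qed.

End ModelFacts.

Section Homomorphisms.
Variables (A : wNalg) (h : form -> A).
Hypothesis hh : is_hom h.

Lemma hom_Ot p q : h (Ot p q) = aot (h p) (h q).
Proof. apply hh. Qed.

Lemma hom_Ci p q : h (Ci p q) = aci (h p) (h q).
Proof. apply hh. Qed.

Lemma hom_St p : h (St p) = ast (h p).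
Proof. apply hh. Qed.

Lemma hom_imp p q : h (fImp p q) = aImp (h p) (h q).
Proof. unfold fImp, aImp. now rewrite hom_St, hom_Ci, hom_St. Qed.

Lemma hom_iff p q : h (fIff p q) = aIff _ (h p) (h q).
Proof. unfold fIff, aIff. now rewrite hom_Ot, !hom_imp. Qed.

Lemma hom_NIff3 p q r : h (fNIff3 p q r) = aNIff3 (h p) (h q) (h r).
Proof. unfold fNIff3, aNIff3, fNIff, aNIff. now rewrite !hom_Ot, !hom_St, !hom_iff. Qed.

Lemma hom_Oplus p q : h (fOplus p q) = aOplus (h p) (h q).
Proof. unfold fOplus, aOplus. now rewrite hom_St, hom_Ot, !hom_St. Qed.

Lemma hom_repl0 p q c c' : h p = h q -> repl0 p q c c' -> h c = h c'.
Proof.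
  intros Hpq. induction 1; rewrite ?hom_Ot, ?hom_Ci, ?hom_St; congruence.
Qed.

End Homomorphisms.

Definition ot_assoc (A : wNalg) : Prop :=
  forall x y z : A, aot x (aot y z) = aot (aot x y) z.

Lemma axiom_sound as_ (M : Nwmodel) (h : form -> alg M) p :
  (as_ = true -> ot_assoc (alg M)) -> is_hom h -> axiom as_ p -> Fperp M (h p).
Proof.
  intros Has hh Ax.
  destruct Ax; rewrite ?(hom_iff hh), ?(hom_imp hh), ?(hom_NIff3 hh), ?(hom_Ot hh),
    ?(hom_Ci hh), ?(hom_St hh), ?(hom_imp hh); try apply Fperp_imp.
  - apply m_a.
  - rewrite aci_comm. apply m_a.
  - rewrite ast_inv. apply m_a.
  - apply m_f.
  - unfold aIff. rewrite aot_comm with (x := h q), Fperp_Ot, Fperp_imp. split; apply m_a.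
  - unfold aImp. rewrite !ast_inv, amix. apply perp_ast_l.
  - apply m_h.
  - rewrite Has by assumption. apply m_a.
  - rewrite Has by assumption. apply m_a.
Qed.

Section Consequence.
Variables (K : Nwmodel -> Prop) (G : form -> Prop).

Lemma conseq_hyp p : G p -> conseq K G p.
Proof.
  intro Hp. exists [p]. split; [now intros g [<-|[]]|].
  intros M _ h _ HG. apply HG. now left.
Qed.

Lemma conseq_valid p : valid K p -> conseq K G p.
Proof. intro Hp. exists []. split; [intros g []|]. intros M KM h hh _. now apply Hp. Qed.

Lemma conseq_rule2 p q r :
  (forall M, K M -> forall h : form -> alg M, is_hom h ->
     Fperp M (h p) -> Fperp M (h q) -> Fperp M (h r)) ->
  conseq K G p -> conseq K G q -> conseq K G r.
Proof.
  intros Hrule [Lp [HLp Hp]] [Lq [HLq Hq]]. exists (Lp ++ Lq). split.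
  - intros g Hg. apply in_app_or in Hg as [Hg|Hg]; auto.
  - intros M KM h hh HL. apply (Hrule M KM h hh).
    + apply Hp; auto. intros g Hg. apply HL, in_or_app; auto.
    + apply Hq; auto. intros g Hg. apply HL, in_or_app; auto.
Qed.

Lemma conseq_rule1 p q :
  (forall M, K M -> forall h : form -> alg M, is_hom h -> Fperp M (h p) -> Fperp M (h q)) ->
  conseq K G p -> conseq K G q.
Proof. intros Hrule Hp. apply (conseq_rule2 (p := p) (q := p)); auto. Qed.

End Consequence.

Lemma NeL_DIs_sound as_ (K : Nwmodel -> Prop) G p :
  (forall M, K M -> in_Nwd M) -> (as_ = true -> forall M, K M -> ot_assoc (alg M)) ->
  NeL_DIs as_ G p -> conseq K G p.
Proof.
  intros HNwd Has.
  induction 1 as [p Hp|p Ax|p q _ IHpq _ IHp|p q _ IHp _ IHq|p q c c' _ IHpq _ IHc R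
                 |p q _ IHpq|p q _ IHp].
  - now apply conseq_hyp.
  - apply conseq_valid. intros M KM h hh. apply (axiom_sound (as_ := as_)); auto.
  - revert IHpq IHp. apply conseq_rule2. intros M _ h hh.
    rewrite (hom_imp hh). apply Fperp_mp.
  - revert IHp IHq. apply conseq_rule2. intros M _ h hh.
    rewrite (hom_Ot hh), Fperp_Ot. tauto.
  - revert IHpq IHc. apply conseq_rule2. intros M _ h hh Hpq Hc.
    rewrite (hom_iff hh) in Hpq. apply Fperp_iff_eq in Hpq.
    now rewrite <- (hom_repl0 hh Hpq (repl1_repl0 R)).
  - revert IHpq. apply conseq_rule1. intros M _ h hh.
    rewrite (hom_Ot hh), Fperp_Ot. tauto.
  - revert IHp. apply conseq_rule1. intros M KM h hh.
    rewrite (hom_Oplus hh). now apply HNwd.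
Qed.

Section Lindenbaum.
Variables (as_ : bool) (G : form -> Prop).
Local Notation derivable := (NeL_DIs as_ G).
Local Notation peq := (peq as_ G).

Definition lind : Type := { P : form -> Prop | exists a, P = peq a }.

Definition lclass (a : form) : lind := exist _ (peq a) (ex_intro _ a eq_refl).

Definition lrep (c : lind) : form :=
  proj1_sig (constructive_indefinite_description _ (proj2_sig c)).

Lemma lclass_lrep c : lclass (lrep c) = c.
Proof.
  unfold lrep. destruct (constructive_indefinite_description _ _) as [a Ha]; simpl.
  destruct c as [P HP]; simpl in Ha; subst P.
  unfold lclass. f_equal. apply proof_irrelevance.
Qed.

Lemma lind_ind (P : lind -> Prop) : (forall a, P (lclass a)) -> forall c, P c.
Proof. intros HP c. rewrite <- lclass_lrep. apply HP. Qed.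

Lemma lclass_eq a b : lclass a = lclass b <-> peq a b.
Proof.
  split.
  - intro Hab. apply (f_equal (@proj1_sig _ _)) in Hab; simpl in Hab.
    rewrite Hab. apply peq_refl.
  - intro Hab. apply eq_sig_hprop; [intros; apply proof_irrelevance|]; simpl.
    apply functional_extensionality; intro c. apply propositional_extensionality.
    split; apply peq_trans; auto using peq_sym.
Qed.

Lemma lrep_lclass a : peq (lrep (lclass a)) a.
Proof. apply lclass_eq, lclass_lrep. Qed.

Definition lot (c d : lind) : lind := lclass (Ot (lrep c) (lrep d)).
Definition lci (c d : lind) : lind := lclass (Ci (lrep c) (lrep d)).
Definition lst (c : lind) : lind := lclass (St (lrep c)).

Lemma lot_lclass a b : lot (lclass a) (lclass b) = lclass (Ot a b).
Proof. apply lclass_eq, peq_Ot; apply lrep_lclass. Qed.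

Lemma lci_lclass a b : lci (lclass a) (lclass b) = lclass (Ci a b).
Proof. apply lclass_eq, peq_Ci; apply lrep_lclass. Qed.

Lemma lst_lclass a : lst (lclass a) = lclass (St a).
Proof. apply lclass_eq, peq_St, lrep_lclass. Qed.

Lemma lot_comm c d : lot c d = lot d c.
Proof.
  induction c as [c] using lind_ind; induction d as [d] using lind_ind.
  rewrite !lot_lclass. apply lclass_eq, peq_Ot_comm.
Qed.

Lemma lci_comm c d : lci c d = lci d c.
Proof.
  induction c as [c] using lind_ind; induction d as [d] using lind_ind.
  rewrite !lci_lclass. apply lclass_eq, peq_Ci_comm.
Qed.

Lemma lst_lst c : lst (lst c) = c.
Proof. induction c as [c] using lind_ind. rewrite !lst_lclass. apply lclass_eq, peq_St_St. Qed.

Lemma lmix c d e : lci (lot c d) e = lci (lot c e) d.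
Proof.
  induction c as [c] using lind_ind; induction d as [d] using lind_ind; induction e as [e] using lind_ind.
  rewrite !lot_lclass, !lci_lclass. apply lclass_eq, peq_mix.
Qed.

Definition lind_alg : wNalg :=
  {| car := lind; aot := lot; aci := lci; ast := lst;
     aot_comm := lot_comm; aci_comm := lci_comm; ast_inv := lst_lst; amix := lmix |}.

Lemma lclass_hom : is_hom (A := lind_alg) lclass.
Proof. split; [|split]; intros; symmetry; auto using lot_lclass, lci_lclass, lst_lclass. Qed.

Definition lperp (u v : ext lind) : Prop :=
  match u, v with
  | inA c, inA d => derivable (fImp (lrep c) (St (lrep d)))
  | inA c, tt_ => derivable (St (lrep c))
  | inA c, ff_ => derivable (lrep c)
  | _, _ => False
  end.

Lemma lperp_lclass a b :
  lperp (inA (lclass a)) (inA (lclass b)) <-> derivable (fImp a (St b)).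
Proof. apply peq_derivable_iff, peq_imp; [|apply peq_St]; apply lrep_lclass. Qed.

Lemma lperp_lclass_t a : lperp (inA (lclass a)) tt_ <-> derivable (St a).
Proof. apply peq_derivable_iff, peq_St, lrep_lclass. Qed.

Lemma lperp_lclass_f a : lperp (inA (lclass a)) ff_ <-> derivable a.
Proof. apply peq_derivable_iff, lrep_lclass. Qed.

Ltac fold_lclass :=
  rewrite <- ?(hom_imp lclass_hom), <- ?(hom_NIff3 lclass_hom);
  cbn [aot aci ast lind_alg];
  repeat first [rewrite lot_lclass | rewrite lci_lclass | rewrite lst_lclass];
  rewrite ?lperp_lclass, ?lperp_lclass_t, ?lperp_lclass_f.

Lemma derivable_imp_St_St a b : derivable (fImp a (St (St b))) <-> derivable (fImp a b).
Proof. apply peq_derivable_iff, peq_imp; [apply peq_refl | apply peq_St_St]. Qed.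

Lemma lm_a (c : lind_alg) : lperp (inA c) (inA (ast c)).
Proof. induction c as [c] using lind_ind. fold_lclass. apply e_ax, A3. Qed.

Lemma lm_b (c d : lind_alg) :
  lperp (inA c) (inA (ast d)) -> lperp (inA d) (inA (ast c)) -> c = d.
Proof.
  induction c as [c] using lind_ind; induction d as [d] using lind_ind. fold_lclass. intros Hcd Hdc.
  apply lclass_eq, e_adj; apply derivable_imp_St_St; assumption.
Qed.

Lemma lm_c (c d : lind_alg) : lperp (inA c) (inA d) <-> lperp (inA (aci c d)) tt_.
Proof.
  induction c as [c] using lind_ind; induction d as [d] using lind_ind. fold_lclass.
  apply peq_derivable_iff, peq_St, peq_Ci; [apply peq_refl | apply peq_St_St].
Qed.

Lemma lm_d (c : lind_alg) : lperp (inA c) tt_ <-> lperp (inA (ast c)) ff_.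
Proof. induction c as [c] using lind_ind. fold_lclass. reflexivity. Qed.

Lemma lm_e (c d : lind_alg) :
  lperp (inA c) ff_ /\ lperp (inA d) ff_ <-> lperp (inA (aot c d)) ff_.
Proof.
  induction c as [c] using lind_ind; induction d as [d] using lind_ind. fold_lclass. split.
  - intros [Hc Hd]. now apply e_adj.
  - intro Hcd. split; [exact (e_ote Hcd)|].
    apply (e_ote (q := c)), (peq_derivable (peq_Ot_comm _ _ c d) Hcd).
Qed.

Lemma lm_f (c d : lind_alg) : lperp (inA (ast (aci c (ast d)))) (inA (ast (aci c d))).
Proof.
  induction c as [c] using lind_ind; induction d as [d] using lind_ind. fold_lclass.
  rewrite derivable_imp_St_St. apply e_ax, A4.
Qed.

Lemma lm_g (c d : lind_alg) : lperp (inA c) (inA d) -> lperp (inA c) ff_ -> lperp (inA d) tt_.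
Proof. induction c as [c] using lind_ind; induction d as [d] using lind_ind. fold_lclass. apply e_mp. Qed.

Lemma lm_h (c d e : lind_alg) :
  lperp (inA (aNIff3 c d e)) (inA (ast (aImp (aImp c d) (aImp (aImp d e) (aImp c e))))).
Proof.
  induction c as [c] using lind_ind; induction d as [d] using lind_ind; induction e as [e] using lind_ind.
  fold_lclass. rewrite derivable_imp_St_St. apply e_ax, A7.
Qed.

Definition lind_model : Nwmodel :=
  {| alg := lind_alg; perp := lperp; m_a := lm_a; m_b := lm_b; m_c := lm_c; m_d := lm_d;
     m_e := lm_e; m_f := lm_f; m_g := lm_g; m_h := lm_h |}.

Lemma Fperp_lind_model a : Fperp lind_model (lclass a) <-> derivable a.
Proof. apply lperp_lclass_f. Qed.

Lemma lind_model_Nwd : in_Nwd lind_model.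
Proof.
  intros c d. induction c as [c] using lind_ind; induction d as [d] using lind_ind.
  unfold aOplus. cbn [perp lind_model alg]. fold_lclass. apply e_di.
Qed.

Lemma lind_alg_assoc : as_ = true -> ot_assoc lind_alg.
Proof.
  intros Has c d e.
  induction c as [c] using lind_ind; induction d as [d] using lind_ind; induction e as [e] using lind_ind.
  simpl. rewrite !lot_lclass. apply lclass_eq, e_adj; apply e_ax; auto using Aas1, Aas2.
Qed.

End Lindenbaum.

Lemma NeL_DIs_complete as_ (K : Nwmodel -> Prop) G p :
  K (lind_model as_ G) -> conseq K G p -> NeL_DIs as_ G p.
Proof.
  intros HK [L [HLG HL]].
  apply Fperp_lind_model, (HL _ HK _ (lclass_hom as_ G)).
  intros g Hg. apply Fperp_lind_model, e_hyp, HLG, Hg.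
Qed.

Theorem NeL_DIs_adequate as_ (K : Nwmodel -> Prop) :
  (forall M, K M -> in_Nwd M) -> (as_ = true -> forall M, K M -> ot_assoc (alg M)) ->
  (forall G, K (lind_model as_ G)) ->
  forall G p, NeL_DIs as_ G p <-> conseq K G p.
Proof.
  intros HNwd Has Hlind G p. split.
  - now apply NeL_DIs_sound.
  - apply NeL_DIs_complete, Hlind.
Qed.

Lemma NL_DI_NeL_DIs_empty as_ p : NL_DI as_ p <-> NeL_DIs as_ (fun _ => False) p.
Proof. split; induction 1; eauto using NeL_DIs, NL_DI; contradiction. Qed.

Lemma valid_conseq_empty K p : valid K p <-> conseq K (fun _ => False) p.
Proof.
  split.
  - apply conseq_valid.
  - intros [L [HL Hp]] M KM h hh. apply Hp; auto. intros g Hg. destruct (HL g Hg).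
Qed.

Theorem theorem5p11 :
  (forall (G : form -> Prop) (p : form), NeL_DIs false G p <-> conseq in_Nwd G p) /\
  (forall (G : form -> Prop) (p : form), NeL_DIs true G p <-> conseq in_Nd G p) /\
  (forall p : form, NL_DI false p <-> valid in_Nwd p) /\
  (forall p : form, NL_DI true p <-> valid in_Nd p).
Proof.
  assert (Hw : forall G p, NeL_DIs false G p <-> conseq in_Nwd G p).
  { apply NeL_DIs_adequate; [easy | discriminate | apply lind_model_Nwd]. }
  assert (Has : forall G p, NeL_DIs true G p <-> conseq in_Nd G p).
  { apply NeL_DIs_adequate.
    - now intros M [_ HM].
    - now intros _ M [HM _].
    - intro G. split; [apply lind_alg_assoc; reflexivity | apply lind_model_Nwd]. }
  split; [exact Hw|]. split; [exact Has|].
  split; intro p; rewrite NL_DI_NeL_DIs_empty, valid_conseq_empty; [apply Hw | apply Has].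
Qed.
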